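(* For a generic Hankel tensor $\mathcal{H}\in\operatorname{H}^3(\mathbb{C}^n)$, its border rank satisfies $\underline{\operatorname{rank}}(\mathcal{H})\ge\left\lfloor\frac{3n-1}{2}\right\rfloor$.
   Context: A tensor $\mathcal{H}\in\operatorname{T}^3(\mathbb{C}^n)$ is Hankel if $\mathcal{H}_{ijk}=h_{i+j+k-3}$ for some vector $h=(h_0,\dots,h_{3(n-1)})$; $\operatorname{H}^3(\mathbb{C}^n)\cong\mathbb{C}^{3n-2}$ is the space of such tensors and ''generic'' means outside a proper Zariski-closed subset. The border rank $\underline{\operatorname{rank}}(\mathcal{A})$ of $\mathcal{A}\in\mathbb{C}^n\otimes\mathbb{C}^n\otimes\mathbb{C}^n$ is the least $r$ such that $\mathcal{A}$ is a limit of tensors of the form $\sum_{i=1}^r u_i\otimes v_i\otimes w_i$. *)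

From Stdlib Require Import Reals.
Open Scope R_scope.

Definition C : Type := (R * R)%type.
Definition C0 : C := (0, 0).
Definition Cadd (x y : C) : C := (fst x + fst y, snd x + snd y).
Definition Cmul (x y : C) : C :=
  (fst x * fst y - snd x * snd y, fst x * snd y + snd x * fst y).

Fixpoint Csum (r : nat) (f : nat -> C) : C :=
  match r with
  | O => C0
  | S r' => Cadd (Csum r' f) (f r')
  end.

Definition Ccv (u : nat -> C) (l : C) : Prop :=
  Un_cv (fun m => fst (u m)) (fst l) /\ Un_cv (fun m => snd (u m)) (snd l).

(** Order-3 tensors in C^n (x) C^n (x) C^n: only entries with indices < n matter
    (0-based indexing). *)
Definition tensor : Type := nat -> nat -> nat -> C.

Definition rank_le (n r : nat) (T : tensor) : Prop :=
  exists u v w : nat -> nat -> C,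
    forall i j k, (i < n)%nat -> (j < n)%nat -> (k < n)%nat ->
      T i j k = Csum r (fun l => Cmul (Cmul (u l i) (v l j)) (w l k)).

Definition border_rank_le (n r : nat) (A : tensor) : Prop :=
  exists Ts : nat -> tensor,
    (forall m, rank_le n r (Ts m)) /\
    forall i j k, (i < n)%nat -> (j < n)%nat -> (k < n)%nat ->
      Ccv (fun m => Ts m i j k) (A i j k).

Definition border_rank_ge (n b : nat) (A : tensor) : Prop :=
  forall r, border_rank_le n r A -> (b <= r)%nat.

(** Hankel tensor with generating vector h = (h_0, ..., h_{3(n-1)}):
    H_{ijk} = h_{i+j+k} (0-based; equals h_{i+j+k-3} in 1-based indexing). *)
Definition hankel (h : nat -> C) : tensor := fun i j k => h (i + j + k)%nat.

Inductive cpoly : Type :=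
| PConst : C -> cpoly
| PVar : nat -> cpoly
| PAdd : cpoly -> cpoly -> cpoly
| PMul : cpoly -> cpoly -> cpoly.

Fixpoint peval (p : cpoly) (x : nat -> C) : C :=
  match p with
  | PConst c => c
  | PVar i => x i
  | PAdd p q => Cadd (peval p x) (peval q x)
  | PMul p q => Cmul (peval p x) (peval q x)
  end.

Fixpoint vars_lt (N : nat) (p : cpoly) : Prop :=
  match p with
  | PConst _ => True
  | PVar i => (i < N)%nat
  | PAdd p q => vars_lt N p /\ vars_lt N q
  | PMul p q => vars_lt N p /\ vars_lt N q
  end.

Definition zero_set (S : cpoly -> Prop) (x : nat -> C) : Prop :=
  forall p, S p -> peval p x = C0.

(** P holds for generic points of C^N: outside a proper Zariski-closed subset.
    Points of C^N are functions nat -> C of which only coordinates < N matter. *)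
Definition generic (N : nat) (P : (nat -> C) -> Prop) : Prop :=
  exists S : cpoly -> Prop,
    (forall p, S p -> vars_lt N p) /\
    (exists x, ~ zero_set S x) /\
    (forall x, ~ zero_set S x -> P x).

(* Restricted to the slices 0, b = (n-1)/2, n-1 of its first factor, a tensor T
   in C^n (x) C^n (x) C^n has a Koszul flattening: a 3n x 3n matrix, linear in T,
   of rank <= 2 when T has rank one.  Hence it has rank <= 2r when T has rank
   <= r and, its (3n-2)-minors being polynomials in the entries of T, also when
   T has border rank <= r.  One such minor, evaluated at Hankel tensors, is a
   polynomial in h which does not vanish at h = e_0 + e_(b+n): there, ordering
   rows and columns by a weight makes the minor triangular with a nonzero
   diagonal.  Off the zero set of that polynomial, 3n - 2 <= 2r. *)

From Pilot Require Import Defs.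
From Stdlib Require Import Reals.
From mathcomp Require Import all_boot all_algebra fingroup perm.
From mathcomp Require Import complex Rstruct zify ring.
Import GRing.Theory.
Set Implicit Arguments. Unset Strict Implicit.

Local Open Scope ring_scope.

Lemma weight_decreasing_perm n (s : 'S_n) (wt : 'I_n -> nat) :
  (forall i, s i != i -> (wt (s i) < wt i)%N) -> s = 1%g.
Proof.
move=> s_wt; apply/permP => i; rewrite perm1; apply/eqP/negPn/negP => si.
have [j sj j_min] := @arg_minnP _ i (fun k => s k != k) wt si.
have ssj : s (s j) != s j by apply: contra sj => /eqP /perm_inj ->.
by have := j_min _ ssj; rewrite leqNgt s_wt.
Qed.

Lemma det_weighted_triangular_neq0 (R : idomainType) n (M : 'M[R]_n)
    (wt : 'I_n -> nat) :
  (forall i j, i != j -> M i j != 0 -> (wt j < wt i)%N) ->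
  (forall i, M i i != 0) -> \det M != 0.
Proof.
move=> M_wt M_diag.
have prod0 (s : 'S_n) : s != 1%g -> \prod_i M i (s i) = 0.
  move=> s1; apply/eqP; apply: contraR s1 => /prodf_neq0 Ms_neq0.
  apply/eqP/weight_decreasing_perm => i si.
  by apply: M_wt (Ms_neq0 i isT); rewrite eq_sym.
rewrite /determinant (bigD1 1%g) //= [X in _ + X]big1 => [|s s1]; last first.
  by rewrite prod0 ?mulr0.
rewrite odd_perm1 expr0 mul1r addr0; apply/prodf_neq0 => i _.
by rewrite perm1.
Qed.

Lemma mxrank_mxsub (K : fieldType) m n m' n' (f : 'I_m' -> 'I_m)
    (g : 'I_n' -> 'I_n) (A : 'M[K]_(m, n)) :
  (\rank (mxsub f g A) <= \rank A)%N.
Proof.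
have -> : mxsub f g A = (rowsub g (rowsub f A)^T)^T.
  by apply/matrixP => i j; rewrite !mxE.
rewrite mxrank_tr (leq_trans (mxrankS (rowsub_sub _ _))) //.
by rewrite mxrank_tr mxrankS ?rowsub_sub.
Qed.

Lemma mxrank_sum_le (K : fieldType) m n r c (A : nat -> 'M[K]_(m, n)) :
  (forall l, \rank (A l) <= c)%N -> (\rank (\sum_(l < r) A l)%R <= c * r)%N.
Proof.
move=> rkA; elim: r => [|r IH]; first by rewrite big_ord0 mxrank0.
rewrite big_ord_recr mulnS addnC (leq_trans (mxrank_add _ _)) //.
exact: leq_add.
Qed.

Definition third (a c : nat) : nat :=
  match a, c with
  | 0, 1 | 1, 0 => 2 | 0, 2 | 2, 0 => 1 | 1, 2 | 2, 1 => 0 | _, _ => 0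
  end.

Definition levi_nz (a c : nat) : bool :=
  match a, c with 0, 1 | 0, 2 | 1, 0 | 1, 2 | 2, 0 | 2, 1 => true | _, _ => false end.

(* The Levi-Civita symbol [eps(a, c, third a c)] on {0, 1, 2}. *)
Definition levi (K : pzRingType) (a c : nat) : K :=
  match a, c with
  | 0, 1 | 1, 2 | 2, 0 => 1 | 0, 2 | 1, 0 | 2, 1 => -1 | _, _ => 0
  end.

Lemma third_lt a c : (third a c < 3)%N.
Proof. by case: a => [|[|[|a]]]; case: c => [|[|[|c]]]. Qed.

Lemma levi_neq0 (K : nzRingType) a c : (levi K a c != 0) = levi_nz a c.
Proof.
by case: a => [|[|[|a]]]; case: c => [|[|[|c]]]; rewrite /= ?eqxx ?oppr_eq0 ?oner_eq0.
Qed.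

Section KoszulFlattening.
Variables (K : fieldType) (n : nat) (s : nat -> nat).

(* The Koszul flattening [B^* (x) A -> Lambda^2 A (x) C] of the tensor [t]
   restricted in its first factor to the slices [s 0], [s 1], [s 2], so that
   [A = K^3], with [Lambda^2 A] identified with [A]: the entry at row
   [a * n + i] and column [c * n + j] is [eps(a, c, d) * t (s d) i j]. *)
Definition koszul_flattening (t : nat -> nat -> nat -> K) : 'M[K]_(3 * n) :=
  \matrix_(i, j) (levi K (i %/ n)%N (j %/ n)%N *
                  t (s (third (i %/ n) (j %/ n))) (i %% n)%N (j %% n)%N).

Lemma koszul_flattening_sum r (f : nat -> nat -> nat -> nat -> K) :
  koszul_flattening (fun i j k => \sum_(l < r) f l i j k) =
  \sum_(l < r) koszul_flattening (f l).
Proof.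
apply/matrixP => i j; rewrite !mxE summxE mulr_sumr.
by apply: eq_bigr => l _; rewrite mxE.
Qed.

Lemma koszul_flattening_ext (t1 t2 : nat -> nat -> nat -> K) :
  (forall d, s d < n)%N ->
  (forall i j k, i < n -> j < n -> k < n -> t1 i j k = t2 i j k)%N ->
  koszul_flattening t1 = koszul_flattening t2.
Proof.
move=> s_lt t12; apply/matrixP => i j.
have n_gt0 : (0 < n)%N by apply: leq_ltn_trans (s_lt 0).
by rewrite !mxE t12 // ltn_pmod.
Qed.

(* A rank-one tensor factors through [K^3], where the skew-symmetric
   3 x 3 matrix [eps(e, c, d) a_(s d)] has the vector [a_(s e)] in its kernel. *)
Lemma mxrank_koszul_flattening_rank1 (a v w : nat -> K) :
  (\rank (koszul_flattening (fun i j k => (a i * v j * w k)%R)) <= 2)%N.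
Proof.
pose M1 : 'M[K]_(3 * n, 3) := \matrix_(i, e) (((i %/ n)%N == e)%:R * v (i %% n)%N).
pose M2 : 'M[K]_(3, 3 * n) :=
  \matrix_(e, j) (levi K e (j %/ n)%N * a (s (third e (j %/ n))) * w (j %% n)%N).
have -> : koszul_flattening (fun i j k => a i * v j * w k) = M1 *m M2.
  apply/matrixP => i j; rewrite !mxE.
  have i_div : (i %/ n < 3)%N.
    case: n i => [|m] [i /= lt_i]; first by rewrite muln0 in lt_i.
    by rewrite ltn_divLR // mulnC.
  rewrite (bigD1 (Ordinal i_div)) //= big1 ?addr0 => [|e ne_e].
    by rewrite !mxE /= eqxx mul1r; ring.
  rewrite !mxE; case: eqP => [i_e|]; last by rewrite !mul0r.
  by case/eqP: ne_e; apply: val_inj; rewrite /= i_e.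
apply: leq_trans (mxrankM_maxr _ _) _.
pose x : 'rV[K]_3 := \row_e a (s e).
have [x0 | x_neq0] := eqVneq x 0.
  suff -> : M2 = 0 by rewrite mxrank0.
  apply/matrixP => e j; rewrite !mxE.
  have : x 0 (Ordinal (third_lt e (j %/ n)%N)) = 0 by rewrite x0 mxE.
  by rewrite mxE /= => ->; rewrite mulr0 mul0r.
have x_ker : (x <= kermx M2)%MS.
  apply/sub_kermxP/matrixP => i j.
  rewrite !mxE !big_ord_recr big_ord0 /= add0r !mxE /=.
  by case: (j %/ n)%N => [|[|[|m]]] /=; ring.
have := mxrankS x_ker; rewrite mxrank_ker rank_rV x_neq0.
by case: (\rank M2) (rank_leq_row M2) => [|[|[|[|m]]]].
Qed.

Lemma mxrank_koszul_flattening_sum_rank1 r (u v w : nat -> nat -> K) :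
  (\rank (koszul_flattening (fun i j k => (\sum_(l < r) u l i * v l j * w l k)%R))
     <= 2 * r)%N.
Proof.
rewrite (@koszul_flattening_sum r (fun l i j k => u l i * v l j * w l k)).
apply: (@mxrank_sum_le _ _ _ _ _
  (fun l => koszul_flattening (fun i j k => u l i * v l j * w l k))) => l.
exact: mxrank_koszul_flattening_rank1.
Qed.

End KoszulFlattening.

Local Notation CR := (complex R).

Definition ofC (x : Defs.C) : CR := Complex (fst x) (snd x).
Definition toC (z : CR) : Defs.C := (Re z, Im z).

Lemma toCK : cancel toC ofC. Proof. by case. Qed.
Lemma ofC_inj : injective ofC. Proof. by case=> a b [c d] [-> ->]. Qed.
Lemma ofC0 : ofC C0 = 0. Proof. by []. Qed.
Lemma ofCD x y : ofC (Cadd x y) = ofC x + ofC y. Proof. by case: x; case: y. Qed.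
Lemma ofCM x y : ofC (Cmul x y) = ofC x * ofC y. Proof. by case: x; case: y. Qed.

Lemma ofC_Csum r f : ofC (Csum r f) = \sum_(l < r) ofC (f l).
Proof. by elim: r => [|r IH]; rewrite ?big_ord0 // big_ord_recr /= ofCD IH. Qed.

(* [Ccv u l] is [cvgC (ofC \o u) (ofC l)] by conversion. *)
Definition cvgC (u : nat -> CR) (l : CR) : Prop :=
  Un_cv (fun m => Re (u m)) (Re l) /\ Un_cv (fun m => Im (u m)) (Im l).

Lemma Un_cv_const (c : R) : Un_cv (fun _ => c) c.
Proof.
by move=> eps eps_gt0; exists 0%N => m _; rewrite /R_dist Rminus_diag Rabs_R0.
Qed.

Lemma cvgC_ext u v l : u =1 v -> cvgC u l -> cvgC v l.
Proof.
by move=> uv [cv_re cv_im]; split; [move: cv_re | move: cv_im];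
  apply: Un_cv_ext => m; rewrite uv.
Qed.

Lemma cvgC_const c : cvgC (fun _ => c) c.
Proof. by split; apply: Un_cv_const. Qed.

Lemma cvgC_add u v a b : cvgC u a -> cvgC v b -> cvgC (fun m => u m + v m) (a + b).
Proof.
case: a b => [a1 a2] [b1 b2] [ua1 ua2] [vb1 vb2].
split; [apply: (Un_cv_ext _ _ _ _ (CV_plus _ _ _ _ ua1 vb1))
       | apply: (Un_cv_ext _ _ _ _ (CV_plus _ _ _ _ ua2 vb2))];
  by move=> m; case: (u m) (v m) => [? ?] [? ?].
Qed.

Lemma cvgC_mul u v a b : cvgC u a -> cvgC v b -> cvgC (fun m => u m * v m) (a * b).
Proof.
case: a b => [a1 a2] [b1 b2] [ua1 ua2] [vb1 vb2]; split.
  apply: (Un_cv_ext _ _ _ _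
    (CV_minus _ _ _ _ (CV_mult _ _ _ _ ua1 vb1) (CV_mult _ _ _ _ ua2 vb2))).
  by move=> m; case: (u m) (v m) => [? ?] [? ?].
apply: (Un_cv_ext _ _ _ _
  (CV_plus _ _ _ _ (CV_mult _ _ _ _ ua1 vb2) (CV_mult _ _ _ _ ua2 vb1))).
by move=> m; case: (u m) (v m) => [? ?] [? ?].
Qed.

Lemma cvgC_eq0 u l : (forall m, u m = 0) -> cvgC u l -> l = 0.
Proof.
move=> u0 /(cvgC_ext u0) [cv_re cv_im].
have [cv0_re cv0_im] := cvgC_const 0.
case: l cv_re cv_im => a b /= cv_re cv_im.
by rewrite (UL_sequence _ _ _ cv_re cv0_re) (UL_sequence _ _ _ cv_im cv0_im).
Qed.

Section PolynomialFunctions.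
Variables (X : Type) (coord : (X -> CR) -> Prop).

Inductive polyfun : (X -> CR) -> Prop :=
| polyfun_const c : polyfun (fun _ => c)
| polyfun_coord f : coord f -> polyfun f
| polyfun_add f g : polyfun f -> polyfun g -> polyfun (fun x => f x + g x)
| polyfun_mul f g : polyfun f -> polyfun g -> polyfun (fun x => f x * g x)
| polyfun_ext f g : polyfun f -> f =1 g -> polyfun g.

Lemma polyfun_sum (I : Type) (r : seq I) (P : pred I) (G : I -> X -> CR) :
  (forall i, polyfun (G i)) -> polyfun (fun x => \sum_(i <- r | P i) G i x).
Proof.
move=> polyG; elim: r => [|i r IH].
  by apply: (polyfun_ext (polyfun_const 0)) => x; rewrite big_nil.
have [Pi | nPi] := boolP (P i).
  by apply: (polyfun_ext (polyfun_add (polyG i) IH)) => x; rewrite big_cons Pi.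
by apply: (polyfun_ext IH) => x; rewrite big_cons (negbTE nPi).
Qed.

Lemma polyfun_prod (I : Type) (r : seq I) (P : pred I) (G : I -> X -> CR) :
  (forall i, polyfun (G i)) -> polyfun (fun x => \prod_(i <- r | P i) G i x).
Proof.
move=> polyG; elim: r => [|i r IH].
  by apply: (polyfun_ext (polyfun_const 1)) => x; rewrite big_nil.
have [Pi | nPi] := boolP (P i).
  by apply: (polyfun_ext (polyfun_mul (polyG i) IH)) => x; rewrite big_cons Pi.
by apply: (polyfun_ext IH) => x; rewrite big_cons (negbTE nPi).
Qed.

Lemma polyfun_cvg f (xs : nat -> X) x : polyfun f ->
  (forall g, coord g -> cvgC (fun m => g (xs m)) (g x)) ->
  cvgC (fun m => f (xs m)) (f x).
Proof.
move=> polyf cvg_coord.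
elim: polyf => {f} [c|g /cvg_coord //|f g _ + _|f g _ + _|f g _ IH fg].
- exact: cvgC_const.
- exact: cvgC_add.
- exact: cvgC_mul.
- by rewrite -fg; apply: cvgC_ext IH => m; rewrite fg.
Qed.

End PolynomialFunctions.

Lemma polyfun_comp (X Y : Type) (coordX : (X -> CR) -> Prop)
    (coordY : (Y -> CR) -> Prop) (g : Y -> X) f :
  polyfun coordX f ->
  (forall b, coordX b -> polyfun coordY (fun y => b (g y))) ->
  polyfun coordY (fun y => f (g y)).
Proof.
move=> polyf polyb.
elim: polyf => {f} [c|b /polyb //|f1 f2 _ + _|f1 f2 _ + _|f1 f2 _ IH f12].
- exact: polyfun_const.
- exact: polyfun_add.
- exact: polyfun_mul.
- by apply: (polyfun_ext IH) => y; rewrite f12.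
Qed.

Definition coords (N : nat) (f : (nat -> Defs.C) -> CR) : Prop :=
  exists2 m, (m < N)%N & forall h, f h = ofC (h m).

Lemma polyfun_cpoly N f : polyfun (coords N) f ->
  exists p, vars_lt N p /\ forall h, ofC (peval p h) = f h.
Proof.
elim=> {f} [c|f [m /ltP lt_m fm]|f g _ [p [Vp fp]] _ [q [Vq gq]]
           |f g _ [p [Vp fp]] _ [q [Vq gq]]|f g _ [p [Vp fp]] fg].
- by exists (PConst (toC c)); split=> // h; rewrite /= toCK.
- by exists (PVar m); split=> // h; rewrite fm.
- by exists (PAdd p q); split=> // h; rewrite /= ofCD fp gq.
- by exists (PMul p q); split=> // h; rewrite /= ofCM fp gq.
- by exists p; split=> // h; rewrite fp fg.
Qed.

Definition entries (n : nat) (f : tensor -> CR) : Prop :=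
  exists i j k, [/\ (i < n)%N, (j < n)%N, (k < n)%N & forall T, f T = ofC (T i j k)].

Lemma generic_polyfun_neq0 N (P : (nat -> Defs.C) -> Prop) f :
  polyfun (coords N) f -> (exists x, f x != 0) -> (forall x, f x != 0 -> P x) ->
  generic N P.
Proof.
move=> /polyfun_cpoly [p [p_vars p_f]] [x0 fx0] f_P.
exists (fun q => q = p); split=> [q -> //|]; split.
  by exists x0 => p0; move: fx0; rewrite -p_f (p0 p erefl) ofC0 eqxx.
move=> x px; apply: f_P; rewrite -p_f; apply: contra_notN px => /eqP px0 q ->.
by apply: ofC_inj; rewrite px0.
Qed.

Local Open Scope nat_scope.

Definition slice (n b d : nat) : nat := match d with 0 => 0 | 1 => b | _ => n - 1 end.

Lemma slice_lt n b d : b < n -> slice n b d < n.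
Proof. by case: d => [|[|d]] //= lt_bn; rewrite ?subn1 ?prednK //; lia. Qed.

(* A (3n-2) x (3n-2) submatrix of the Koszul flattening with slices 0, b, n-1:
   its index [p] stands for row [row_block p * n + row_pos p] and column
   [col_block p * n + col_pos p]. *)
Section MinorIndices.
Variables n b : nat.
Hypothesis b_half : 2 * b + 1 = n \/ 2 * b + 2 = n.

Definition row_block p := if p < n then 1 else if p < 2 * n then 0 else 2.
Definition row_pos p :=
  if p < n then p else if p < 2 * n then p - n else p - 2 * n + 1.
Definition col_block p :=
  if p < n then (if p == 0 then 2 else if p <= b + 1 then 0 else 2)
  else if p < 2 * n then (if p - n <= b + 1 then 1 else 2)
  else (if p - 2 * n + 1 <= n - b - 1 then 0 else 1).
Definition col_pos p :=
  if p < n then (if p == 0 then 0 else if p <= b + 1 then b + 1 - p else b + n - p)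
  else if p < 2 * n then (if p - n <= b + 1 then b + 1 - (p - n) else n - (p - n))
  else (if p - 2 * n + 1 <= n - b - 1 then n - (p - 2 * n + 1)
        else b + n - (p - 2 * n + 1)).

(* Entry (p, q) of the submatrix at the Hankel tensor with h supported on
   {0, b + n} is nonzero exactly when [hit] holds at the row of p and column of q. *)
Definition hit rb cb j k : Prop :=
  levi_nz rb cb /\
  (slice n b (third rb cb) + j + k = 0 \/ slice n b (third rb cb) + j + k = b + n).

Definition weight p :=
  if p < n then (if p == 0 then 1 else 0) else if p < 2 * n then 2
  else (if p - 2 * n + 1 == n - b - 1 then 0 else 2).

Lemma minor_index_bounds p : p < 3 * n - 2 ->
  [/\ row_pos p < n, col_pos p < n, row_block p < 3 & col_block p < 3].
Proof.
rewrite /row_pos /col_pos /row_block /col_block => lt_p.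
by repeat (case: ifP => /=); try (case: eqP => /=); split; lia.
Qed.

Lemma minor_diag_hit p : p < 3 * n - 2 ->
  hit (row_block p) (col_block p) (row_pos p) (col_pos p).
Proof.
rewrite /hit /row_pos /col_pos /row_block /col_block => lt_p.
by repeat (case: ifP => /=); repeat (case: eqP => /=); lia.
Qed.

Lemma minor_hit_weight_lt p q : p < 3 * n - 2 -> q < 3 * n - 2 -> p <> q ->
  hit (row_block p) (col_block q) (row_pos p) (col_pos q) -> weight q < weight p.
Proof.
rewrite /hit /row_pos /col_pos /row_block /col_block /weight => lt_p lt_q ne_pq.
by repeat (case: ifP => /=); repeat (case: eqP => /=); lia.
Qed.

End MinorIndices.

Definition mid n := (n - 1) %/ 2.

Lemma mid_half n : 0 < n -> 2 * mid n + 1 = n \/ 2 * mid n + 2 = n.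
Proof. rewrite /mid; lia. Qed.

Local Open Scope ring_scope.

Section KoszulMinor.
Variable n : nat.
Local Notation b := (mid n).

Lemma minor_index_pos (p : 'I_(3 * n - 2)) : (0 < n)%N.
Proof. by case: p => p /=; lia. Qed.

Lemma minor_row_lt (p : 'I_(3 * n - 2)) :
  (row_block n p * n + row_pos n p < 3 * n)%N.
Proof.
have [lt_r _ lt_rb _] := minor_index_bounds (mid_half (minor_index_pos p)) (ltn_ord p).
nia.
Qed.

Lemma minor_col_lt (p : 'I_(3 * n - 2)) :
  (col_block n b p * n + col_pos n b p < 3 * n)%N.
Proof.
have [_ lt_c _ lt_cb] := minor_index_bounds (mid_half (minor_index_pos p)) (ltn_ord p).
nia.
Qed.

Definition koszul_minor (t : nat -> nat -> nat -> CR) : 'M[CR]_(3 * n - 2) :=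
  mxsub (fun p => Ordinal (minor_row_lt p)) (fun q => Ordinal (minor_col_lt q))
    (koszul_flattening n (slice n b) t).

Lemma koszul_minorE t p q :
  koszul_minor t p q = levi CR (row_block n p) (col_block n b q) *
    t (slice n b (third (row_block n p) (col_block n b q)))
      (row_pos n p) (col_pos n b q).
Proof.
have n_gt0 := minor_index_pos p.
have [lt_r _ _ _] := minor_index_bounds (mid_half n_gt0) (ltn_ord p).
have [_ lt_c _ _] := minor_index_bounds (mid_half n_gt0) (ltn_ord q).
by rewrite !mxE /= !divnMDl // !modnMDl !divn_small // !modn_small // !addn0.
Qed.

Hypothesis n_gt0 : (0 < n)%N.

Lemma mxrank_koszul_minor r (T : tensor) : rank_le n r T ->
  (\rank (koszul_minor (fun i j k => ofC (T i j k))) <= 2 * r)%N.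
Proof.
move=> [u [v [w T_sum]]]; rewrite /koszul_minor.
apply: leq_trans (mxrank_mxsub _ _ _) _.
rewrite (@koszul_flattening_ext _ n _ _
  (fun i j k => \sum_(l < r) ofC (u l i) * ofC (v l j) * ofC (w l k))).
- exact: (@mxrank_koszul_flattening_sum_rank1 _ n _ r (fun l i => ofC (u l i))
           (fun l j => ofC (v l j)) (fun l k => ofC (w l k))).
- by move=> d; apply: slice_lt; rewrite /mid; lia.
move=> i j k /ltP lt_i /ltP lt_j /ltP lt_k.
by rewrite T_sum // ofC_Csum; apply: eq_bigr => l _; rewrite !ofCM.
Qed.

Definition koszul_det (T : tensor) : CR :=
  \det (koszul_minor (fun i j k => ofC (T i j k))).

Lemma koszul_det_rank_le r T : rank_le n r T -> (2 * r < 3 * n - 2)%N ->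
  koszul_det T = 0.
Proof.
move=> T_r lt_r; apply/eqP; apply: contraTT lt_r => det_neq0.
have := mxrank_koszul_minor T_r.
by rewrite mxrank_unit ?unitmxE ?unitfE // -leqNgt.
Qed.

Lemma polyfun_koszul_det : polyfun (entries n) koszul_det.
Proof.
apply: (@polyfun_ext _ _ (fun T => \sum_(s : 'S_(3 * n - 2))
  ((-1) ^+ s * \prod_p koszul_minor (fun i j k => ofC (T i j k)) p (s p)))) => //.
apply: polyfun_sum => s; apply: polyfun_mul; first exact: polyfun_const.
apply: polyfun_prod => p; set q := s p.
apply: (@polyfun_ext _ _ (fun T => levi CR (row_block n p) (col_block n b q) *
  ofC (T (slice n b (third (row_block n p) (col_block n b q)))
         (row_pos n p) (col_pos n b q)))); last by move=> T; rewrite koszul_minorE.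
apply: polyfun_mul; first exact: polyfun_const.
have [lt_r _ _ _] := minor_index_bounds (mid_half n_gt0) (ltn_ord p).
have [_ lt_c _ _] := minor_index_bounds (mid_half n_gt0) (ltn_ord q).
apply: polyfun_coord; do 3 eexists; split; [|exact: lt_r|exact: lt_c|by []].
by apply: slice_lt; rewrite /mid; lia.
Qed.

Lemma koszul_det_border_rank_le r T : border_rank_le n r T ->
  (2 * r < 3 * n - 2)%N -> koszul_det T = 0.
Proof.
move=> [Ts [Ts_r Ts_cvg]] lt_r.
apply: (@cvgC_eq0 (fun m => koszul_det (Ts m))).
  by move=> m; apply: koszul_det_rank_le.
apply: polyfun_cvg polyfun_koszul_det _ => f [i [j [k [lt_i lt_j lt_k fT]]]].
have cvg_ijk : cvgC (fun m => ofC (Ts m i j k)) (ofC (T i j k)).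
  by apply: Ts_cvg; apply/ltP.
by rewrite fT; apply: cvgC_ext cvg_ijk => m; rewrite fT.
Qed.

Lemma polyfun_koszul_det_hankel :
  polyfun (coords (3 * n - 2)) (fun h => koszul_det (hankel h)).
Proof.
apply: polyfun_comp polyfun_koszul_det _.
move=> f [i [j [k [lt_i lt_j lt_k fT]]]]; apply: polyfun_coord.
by exists (i + j + k)%N; [lia | move=> h; rewrite fT].
Qed.

(* At this Hankel tensor the minor is triangular with respect to [weight]. *)
Definition hankel_witness (m : nat) : Defs.C :=
  if (m == 0)%N || (m == b + n)%N then (1%R, 0%R) else (0%R, 0%R).

Lemma koszul_det_hankel_witness : koszul_det (hankel hankel_witness) != 0.
Proof.
have b_half := mid_half n_gt0.
have witnessE m :
  ofC (hankel_witness m) = if (m == 0)%N || (m == b + n)%N then 1 else 0.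
  by rewrite /hankel_witness; case: ifP.
apply: (@det_weighted_triangular_neq0 _ _ _ (weight n b)) => [p q ne_pq|p];
  rewrite koszul_minorE /hankel !plusE witnessE.
  rewrite mulf_eq0 negb_or levi_neq0 => /andP [nz_pq].
  case: ifP => [hit_pq _|]; last by rewrite eqxx.
  apply: (minor_hit_weight_lt b_half (ltn_ord p) (ltn_ord q)).
    by move/val_inj => eq_pq; rewrite eq_pq eqxx in ne_pq.
  by split=> //; case/orP: hit_pq => /eqP ->; [left|right].
have [nz_pp hit_pp] := minor_diag_hit b_half (ltn_ord p).
apply: mulf_neq0; first by rewrite levi_neq0.
by case: hit_pp => ->; rewrite eqxx ?orbT oner_eq0.
Qed.

End KoszulMinor.

Lemma lt_div2_double k r : (r < Nat.div k 2)%coq_nat -> (2 * r < k - 1)%N.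
Proof.
have := Nat.div_mod k 2; have := Nat.mod_upper_bound k 2.
lia.
Qed.

Theorem theorem5p2 (n : nat) :
  generic (Nat.sub (Nat.mul 3 n) 2)
    (fun h => border_rank_ge n (Nat.div (Nat.sub (Nat.mul 3 n) 1) 2) (hankel h)).
Proof.
have [-> | n_gt0] := posnP n.
  by apply: (@generic_polyfun_neq0 _ _ (fun _ => 1)) => [||h _ r _];
    [exact: polyfun_const | exists (fun _ => C0); exact: oner_neq0 | apply/leP].
apply: generic_polyfun_neq0 (polyfun_koszul_det_hankel n_gt0) _ _.
  by exists (hankel_witness n); apply: koszul_det_hankel_witness.
move=> h det_h r h_r; have [//|lt_r] := Nat.le_gt_cases ((3 * n - 1) / 2) r.
case/eqP: det_h; apply: (koszul_det_border_rank_le n_gt0 h_r).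
by have := lt_div2_double lt_r; rewrite -!minusE -!multE; lia.
Qed.
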